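(* Consider equation (E) and assume each $\tau_i$ is non-decreasing. If $$\limsup_{t\to+\infty}\prod_{j=1}^{m}\bigg(\prod_{i=1}^{m}\int_{\tau_j(t)}^{t}p_i(s)\,ds\bigg)^{1/m}>\frac{1}{m^{m}},$$ then all solutions of (E) oscillate.
   Context: Equation (E) is $x'(t)+\sum_{i=1}^{m}p_i(t)\,x(\tau_i(t))=0$, $t\ge t_0$, where $m\ge1$ is an integer and, for each $i$, $p_i,\tau_i:[t_0,\infty)\to[0,\infty)$ are continuous, $\tau_i(t)\le t$ for $t\ge t_0$, and $\lim_{t\to\infty}\tau_i(t)=\infty$. Let $\tau(t)=\min_i\tau_i(t)$ and $\tau_{(-1)}(t)=\sup\{s:\tau(s)\le t\}$. A solution of (E) is a function $x\in C([T_0,\infty);\mathbb{R})$ for some $T_0\ge t_0$ which is continuously differentiable on $[\tau_{(-1)}(T_0),\infty)$ and satisfies (E) for $t\ge\tau_{(-1)}(T_0)$. A solution is oscillatory if it has arbitrarily large zeros; ''all solutions oscillate'' means every solution is oscillatory. *)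

From Stdlib Require Import Reals Lra Lia Classical ClassicalEpsilon.
Open Scope R_scope.

(* Riemann integral of f over [a,b] (the value given by Stdlib's RiemannInt
   when f is Riemann integrable; an unspecified real otherwise). *)
Definition Rint (f : R -> R) (a b : R) : R :=
  epsilon (inhabits 0)
    (fun v => exists pr : Riemann_integrable f a b, RiemannInt pr = v).

Definition Rroot (m : nat) (x : R) : R :=
  if Rle_dec x 0 then 0 else Rpower x (/ INR m).

Definition cont_on_from (a : R) (f : R -> R) : Prop :=
  forall t, a <= t -> forall eps, 0 < eps -> exists delta, 0 < delta /\
    forall s, a <= s -> Rabs (s - t) < delta -> Rabs (f s - f t) < eps.

Definition deriv_from (a : R) (f : R -> R) (t l : R) : Prop :=
  forall eps, 0 < eps -> exists delta, 0 < delta /\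
    forall h, h <> 0 -> Rabs h < delta -> a <= t + h ->
      Rabs ((f (t + h) - f t) / h - l) < eps.

Fixpoint tau_min (tau : nat -> R -> R) (n : nat) (t : R) : R :=
  match n with
  | O => tau O t
  | S k => Rmin (tau_min tau k t) (tau (S k) t)
  end.

(* x, defined on [T0, +oo), is a solution of
   x'(t) + sum_{i<m} p_i(t) x(tau_i(t)) = 0 (indices shifted to 0..m-1).
   T1 is tau_{(-1)}(T0) = sup { s >= t0 : tau(s) <= T0 }. *)
Definition is_solution (m : nat) (t0 : R) (p tau : nat -> R -> R)
    (T0 : R) (x : R -> R) : Prop :=
  t0 <= T0 /\ cont_on_from T0 x /\
  exists T1 : R,
    is_lub (fun s => t0 <= s /\ tau_min tau (m - 1) s <= T0) T1 /\
    exists x' : R -> R,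
      cont_on_from T1 x' /\
      (forall t, T1 <= t -> deriv_from T1 x t (x' t)) /\
      (forall t, T1 <= t ->
         x' t + sum_f_R0 (fun i => p i t * x (tau i t)) (m - 1) = 0).

Definition oscillatory (T0 : R) (x : R -> R) : Prop :=
  forall T, exists t, T <= t /\ T0 <= t /\ x t = 0.

Definition limsup_gt (F : R -> R) (c : R) : Prop :=
  exists eps, 0 < eps /\ forall T, exists t, T <= t /\ c + eps < F t.

(* Suppose a solution x has no zeros beyond some point.  Being continuous it
   then has a constant sign there, and since -x is again a solution we may
   assume x > 0 on [A, +oo).  Then x' = - sum_i p_i x(tau_i) <= 0 eventually,
   so x is eventually nonincreasing.  Integrating the equation over
   [tau_j(t), t] and using tau_i(s) <= tau_i(t) gives, for all large t,
       sum_i a_ij y_i <= y_j,   a_ij = int_{tau_j(t)}^t p_i,   y_i = x(tau_i(t)) > 0.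
   AM-GM applied to each of these m row inequalities, multiplied over j, yields
       prod_j (prod_i a_ij)^(1/m) <= 1/m^m   for all large t,
   contradicting the limsup hypothesis. *)

From Stdlib Require Import Reals Lra Lia Classical ClassicalEpsilon.
From mathcomp Require all_boot all_order all_algebra Rstruct.
Open Scope R_scope.
Set Bullet Behavior "Strict Subproofs".

Lemma Rroot_nonneg (m : nat) (x : R) : 0 <= Rroot m x.
Proof.
  unfold Rroot. destruct (Rle_dec x 0); [lra |].
  left. apply exp_pos.
Qed.

Lemma Rroot_pow (m : nat) (x : R) :
  (1 <= m)%nat -> 0 <= x -> Rroot m x ^ m = x.
Proof.
  intros Hm Hx. unfold Rroot. destruct (Rle_dec x 0) as [Hle | Hgt].
  - rewrite pow_i by lia. lra.
  - rewrite <- Rpower_pow by apply exp_pos.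
    rewrite Rpower_mult, Rinv_l by (apply not_0_INR; lia).
    apply Rpower_1. lra.
Qed.

Module AGM.
Import all_boot all_order all_algebra Rstruct.
Import Order.TTheory GRing.Theory Num.Theory.

Section ProductBounds.
Local Open Scope ring_scope.
Variables (F : realDomainType) (I : finType).
Let k := #|I|.

(* If  sum_i A i j * y i <= y j  for every j, with A >= 0 and y > 0, then
   AM-GM on each row and a product over the rows give
   (k^k)^k * prod_{i,j} A i j <= 1, where k is the number of indices. *)
Lemma AGM_rows (A : I -> I -> F) (y : I -> F) :
  (forall i j, 0 <= A i j) -> (forall i, 0 < y i) ->
  (forall j, \sum_i A i j * y i <= y j) ->
  (k%:R ^+ k) ^+ k * \prod_j \prod_i A i j <= 1.
Proof.
move=> A_ge0 y_gt0 rows.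
have Y_gt0 : 0 < \prod_i y i by apply: prodr_gt0.
have Ay_ge0 j i : 0 <= A i j * y i by rewrite mulr_ge0 // ltW.
have row j : k%:R ^+ k * (\prod_i A i j * \prod_i y i) <= y j ^+ k.
  have agm := leif_AGM_scaled (A := predT) (E := fun i => A i j * y i).
  have scale : \prod_i (A i j * y i *+ k) = k%:R ^+ k * (\prod_i A i j * \prod_i y i).
    transitivity (\prod_i (k%:R * (A i j * y i))).
      by apply: eq_bigr => i _; rewrite mulr_natl.
    by rewrite !big_split prodr_const.
  rewrite -scale.
  apply: le_trans ((agm _).1) _ => [i _|]; first by rewrite mulrn_wge0.
  have -> : #|@predT I| = k by [].
  by apply: lerXn2r; rewrite ?nnegrE; [exact: sumr_ge0 | exact: ltW | exact: rows].
have Yk_gt0 : 0 < (\prod_i y i) ^+ k by rewrite exprn_gt0.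
rewrite -(ger_pMl _ Yk_gt0) -mulrA.
have -> : (k%:R ^+ k) ^+ k * (\prod_j \prod_i A i j * (\prod_i y i) ^+ k)
    = \prod_j (k%:R ^+ k * (\prod_i A i j * \prod_i y i)).
  by rewrite !big_split /= !prodr_const.
rewrite -prodrXl; apply: ler_prod => j _; rewrite row andbT.
by rewrite mulr_ge0 ?exprn_ge0 ?mulr_ge0 ?prodr_ge0 // => i _; rewrite ltW.
Qed.

Lemma AGM_roots (r P : I -> F) :
  (0 < k)%N -> (forall j, 0 <= r j) -> (forall j, r j ^+ k <= P j) ->
  (k%:R ^+ k) ^+ k * \prod_j P j <= 1 ->
  k%:R ^+ k * \prod_j r j <= 1.
Proof.
move=> k_gt0 r_ge0 rP bound.
have kk_ge0 : 0 <= k%:R ^+ k :> F by rewrite exprn_ge0.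
rewrite -(expr_le1 k_gt0) ?mulr_ge0 ?prodr_ge0 // exprMn -prodrXl.
apply: le_trans bound; rewrite ler_wpM2l ?exprn_ge0 //.
by apply: ler_prod => j _; rewrite rP exprn_ge0.
Qed.
End ProductBounds.

Lemma sum_f_R0_big (w : nat -> R) (n : nat) :
  sum_f_R0 w n = (\sum_(i < n.+1) w i)%R.
Proof.
elim: n => [|n IH]; first by rewrite big_ord_recr big_ord0 /= add0r.
by rewrite big_ord_recr /= -IH.
Qed.

Lemma prod_f_R0_big (w : nat -> R) (n : nat) :
  prod_f_R0 w n = (\prod_(i < n.+1) w i)%R.
Proof.
elim: n => [|n IH]; first by rewrite big_ord_recr big_ord0 /= mul1r.
by rewrite big_ord_recr /= -IH.
Qed.

Lemma pow_exprn (x : R) (n : nat) : x ^ n = (x ^+ n)%R.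
Proof. by elim: n => [//|n IH]; rewrite /= exprS IH. Qed.

Lemma INR_natr (n : nat) : INR n = (n%:R)%R.
Proof. by elim: n => [//|n IH]; rewrite S_INR IH -addn1 natrD. Qed.

Lemma delay_AGM_bound (m : nat) (A : nat -> nat -> R) (y : nat -> R) :
  (1 <= m)%coq_nat ->
  (forall i j, (i < m)%coq_nat -> (j < m)%coq_nat -> 0 <= A i j) ->
  (forall i, (i < m)%coq_nat -> 0 < y i) ->
  (forall j, (j < m)%coq_nat ->
     sum_f_R0 (fun i => A i j * y i) (m - 1)%coq_nat <= y j) ->
  INR m ^ m * prod_f_R0 (fun j => Rroot m (prod_f_R0 (fun i => A i j) (m - 1)%coq_nat))
                (m - 1)%coq_nat <= 1.
Proof.
case: m => [/ssrnat.leP //|n] m_ge1 A_ge0 y_gt0 rows.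
rewrite Nat.sub_succ Nat.sub_0_r in rows *.
have ord_lt (i : 'I_n.+1) : (i < n.+1)%coq_nat by apply/ssrnat.ltP.
have := @AGM_roots R 'I_n.+1 (fun j => Rroot n.+1 (prod_f_R0 (fun i => A i j) n))
          (fun j => prod_f_R0 (fun i => A i j) n).
rewrite card_ord prod_f_R0_big pow_exprn INR_natr => roots; apply/RleP.
apply: roots => // [j|j|].
- by apply/RleP; apply: Rroot_nonneg.
- rewrite -pow_exprn Rroot_pow //.
  by apply: prod_SO_pos => i i_le; apply: A_ge0; [lia | exact: ord_lt].
- have := @AGM_rows R 'I_n.+1 (fun i j => A i j) (fun i => y i).
  rewrite card_ord => rows_bound.
  under eq_bigr do rewrite prod_f_R0_big.
  apply: rows_bound.
  + by move=> i j; apply/RleP; apply: A_ge0.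
  + by move=> i; apply/RltP; apply: y_gt0.
  + by move=> j; rewrite -(sum_f_R0_big (fun i => A i j * y i)); apply/RleP; apply: rows.
Qed.
End AGM.

From Coquelicot Require Import Coquelicot.

Lemma cont_on_from_interior (a : R) (f : R -> R) (u : R) :
  cont_on_from a f -> a < u -> continuity_pt f u.
Proof.
  intros Hc Hu eps Heps.
  destruct (Hc u (Rlt_le _ _ Hu) eps Heps) as [d [Hd Hf]].
  exists (Rmin d (u - a)). split; [apply Rmin_pos; lra |].
  intros s [_ Hs]. simpl in *. unfold R_dist in *.
  assert (Hsd : Rabs (s - u) < d) by (eapply Rlt_le_trans; [exact Hs | apply Rmin_l]).
  assert (Hsa : Rabs (s - u) < u - a) by (eapply Rlt_le_trans; [exact Hs | apply Rmin_r]).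
  apply Rabs_def2 in Hsa. apply Hf; auto; lra.
Qed.

Lemma deriv_from_interior (a : R) (f : R -> R) (t l : R) :
  deriv_from a f t l -> a < t -> derivable_pt_lim f t l.
Proof.
  intros Hd Ht eps Heps.
  destruct (Hd eps Heps) as [d [Hdp Hf]].
  assert (Hpos : 0 < Rmin d (t - a)) by (apply Rmin_pos; lra).
  exists (mkposreal _ Hpos). intros h Hh Hlt. simpl in Hlt.
  assert (Hhd : Rabs h < d) by (eapply Rlt_le_trans; [exact Hlt | apply Rmin_l]).
  assert (Hha : Rabs h < t - a) by (eapply Rlt_le_trans; [exact Hlt | apply Rmin_r]).
  apply Rabs_def2 in Hha. apply Hf; auto; lra.
Qed.

Lemma Rint_RInt (f : R -> R) (a b : R) :
  a <= b -> (forall u, a <= u <= b -> continuity_pt f u) -> Rint f a b = RInt f a b.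
Proof.
  intros Hab Hc. unfold Rint.
  destruct (epsilon_spec (inhabits 0)
              (fun v => exists pr : Riemann_integrable f a b, RiemannInt pr = v))
    as [pr Hpr].
  - exists (RiemannInt (continuity_implies_RiemannInt Hab Hc)).
    exists (continuity_implies_RiemannInt Hab Hc). reflexivity.
  - rewrite <- Hpr. symmetry. apply RInt_Reals.
Qed.

Lemma RInt_derivable (f : R -> R) (t0 a s : R) :
  cont_on_from t0 f -> t0 < a -> t0 < s ->
  derivable_pt_lim (fun u => RInt f a u) s (f s).
Proof.
  intros Hc Ha Hs. apply is_derive_Reals.
  apply (is_derive_RInt f (fun u => RInt f a u) a s).
  - apply (locally_interval _ s (Finite t0) p_infty); simpl; auto.
    intros y Hy _. apply (@RInt_correct R_CompleteNormedModule).
    apply (@ex_RInt_continuous R_CompleteNormedModule).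
    intros u [Hu _]. apply continuity_pt_filterlim.
    apply (cont_on_from_interior t0); auto.
    eapply Rlt_le_trans; [| exact Hu]. apply Rmin_glb_lt; auto.
  - apply continuity_pt_filterlim. apply (cont_on_from_interior t0); auto.
Qed.

Lemma nonincreasing_of_deriv_nonpos (f df : R -> R) (a b : R) :
  a <= b -> (forall s, a <= s <= b -> derivable_pt_lim f s (df s)) ->
  (forall s, a <= s <= b -> df s <= 0) -> f b <= f a.
Proof.
  intros Hab Hd Hneg.
  destruct (MVT_gen f a b df) as [c [Hc Heq]].
  - intros s Hs. rewrite Rmin_left, Rmax_right in Hs by lra.
    apply is_derive_Reals. apply Hd. lra.
  - intros s Hs. rewrite Rmin_left, Rmax_right in Hs by lra.
    apply derivable_continuous_pt. exists (df s). apply Hd. lra.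
  - rewrite Rmin_left, Rmax_right in Hc by lra.
    assert (df c * (b - a) <= 0) by (apply Rmult_le_0_r; [apply Hneg |]; lra).
    lra.
Qed.

Lemma derivable_pt_lim_sum_f_R0 (g : nat -> R -> R) (dg : nat -> R) (s : R) (n : nat) :
  (forall i, (i <= n)%nat -> derivable_pt_lim (g i) s (dg i)) ->
  derivable_pt_lim (fun u => sum_f_R0 (fun i => g i u) n) s (sum_f_R0 dg n).
Proof.
  induction n as [| n IH]; intros Hg; simpl.
  - apply Hg. lia.
  - apply (derivable_pt_lim_plus (fun u => sum_f_R0 (fun i => g i u) n) (g (S n))).
    + apply IH. intros i Hi. apply Hg. lia.
    + apply Hg. lia.
Qed.

Lemma sum_f_R0_nonneg (f : nat -> R) (n : nat) :
  (forall i, (i <= n)%nat -> 0 <= f i) -> 0 <= sum_f_R0 f n.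
Proof.
  intros Hf. rewrite <- (sum_eq_R0 (fun _ => 0) n) by reflexivity.
  apply sum_Rle. exact Hf.
Qed.

(* By the intermediate value theorem, a continuous function without zeros
   on [a, b] keeps the sign it has at a. *)
Lemma sign_persists (f : R -> R) (a b : R) :
  a <= b -> (forall u, a <= u <= b -> continuity_pt f u) ->
  (forall u, a <= u <= b -> f u <> 0) -> 0 < f a -> 0 < f b.
Proof.
  intros Hab Hc Hnz Ha.
  destruct (Rlt_dec 0 (f b)) as [| Hfb]; [assumption | exfalso].
  assert (Hb : f b < 0) by (assert (f b <> 0) by (apply Hnz; lra); lra).
  assert (Hlt : a < b) by (destruct (Req_dec a b) as [<- |]; lra).
  destruct (Ranalysis5.IVT_interv (fun u => - f u) a b) as [c [Hc' Hfc]];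
    try assumption; try lra.
  - intros u Hu. apply continuity_pt_opp. apply Hc. exact Hu.
  - apply (Hnz c Hc'). lra.
Qed.

Lemma eventually_signed (f : R -> R) (a b : R) :
  a < b -> (forall s, a < s -> continuity_pt f s) -> (forall s, b <= s -> f s <> 0) ->
  (forall s, b <= s -> 0 < f s) \/ (forall s, b <= s -> f s < 0).
Proof.
  intros Hab Hc Hnz.
  destruct (Rlt_dec 0 (f b)) as [Hpos | Hnpos].
  - left. intros s Hs. apply (sign_persists f b s); auto.
    + intros u Hu. apply Hc. lra.
    + intros u Hu. apply Hnz. lra.
  - right. intros s Hs.
    assert (Hb : f b < 0) by (assert (f b <> 0) by (apply Hnz; lra); lra).
    cut (0 < - f s); [lra |].
    apply (sign_persists (fun u => - f u) b s); auto; [| | lra].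
    + intros u Hu. apply continuity_pt_opp. apply Hc. lra.
    + intros u Hu. assert (f u <> 0) by (apply Hnz; lra). lra.
Qed.

Lemma eventually_forall_lt (n : nat) (P : nat -> R -> Prop) :
  (forall i, (i < n)%nat -> exists T, forall t, T <= t -> P i t) ->
  exists T, forall t, T <= t -> forall i, (i < n)%nat -> P i t.
Proof.
  induction n as [| n IH]; intros H.
  - exists 0. intros. lia.
  - destruct IH as [T1 HT1]; [intros i Hi; apply H; lia |].
    destruct (H n ltac:(lia)) as [T2 HT2].
    exists (Rmax T1 T2). intros t Ht i Hi.
    destruct (Nat.eq_dec i n) as [-> | Hne].
    + apply HT2. eapply Rle_trans; [apply Rmax_r | exact Ht].
    + apply HT1; [eapply Rle_trans; [apply Rmax_l | exact Ht] | lia].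
Qed.

Lemma limsup_gt_not_eventually_le (F : R -> R) (c : R) :
  limsup_gt F c -> ~ (exists T, forall t, T <= t -> F t <= c).
Proof.
  intros [eps [Heps Hlim]] [T HT].
  destruct (Hlim T) as [t [Ht Hgt]].
  specialize (HT t Ht). lra.
Qed.

Lemma tau_min_le_first (tau : nat -> R -> R) (n : nat) (t : R) :
  tau_min tau n t <= tau O t.
Proof.
  induction n as [| n IH]; simpl; [lra |].
  eapply Rle_trans; [apply Rmin_l | exact IH].
Qed.

Section DelayEquation.
Variables (m : nat) (t0 : R) (p tau : nat -> R -> R).
Hypothesis m_pos : (1 <= m)%nat.
Hypothesis p_cont : forall i, (i < m)%nat -> cont_on_from t0 (p i).
Hypothesis p_nonneg : forall i t, (i < m)%nat -> t0 <= t -> 0 <= p i t.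
Hypothesis tau_le : forall i t, (i < m)%nat -> t0 <= t -> tau i t <= t.
Hypothesis tau_unbounded :
  forall i, (i < m)%nat -> forall M, exists T, forall t, T <= t -> M <= tau i t.
Hypothesis tau_mono :
  forall i s t, (i < m)%nat -> t0 <= s -> s <= t -> tau i s <= tau i t.

Definition root_product (t : R) : R :=
  prod_f_R0 (fun j => Rroot m (prod_f_R0 (fun i => Rint (p i) (tau j t) t) (m - 1)))
    (m - 1).

Lemma delays_eventually_beyond (M : R) :
  exists T, M <= T /\ forall t, T <= t -> forall i, (i < m)%nat -> M <= tau i t.
Proof.
  destruct (eventually_forall_lt m (fun i t => M <= tau i t)
              (fun i Hi => tau_unbounded i Hi M)) as [T HT].
  exists (Rmax T M). split; [apply Rmax_r |].
  intros t Ht. apply HT. eapply Rle_trans; [apply Rmax_l | exact Ht].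
Qed.

Lemma Rint_coeff_RInt (i : nat) (a b : R) :
  (i < m)%nat -> t0 < a -> a <= b -> Rint (p i) a b = RInt (p i) a b.
Proof.
  intros Hi Ha Hab. apply Rint_RInt; [exact Hab |].
  intros u Hu. apply (cont_on_from_interior t0); [auto | lra].
Qed.

Lemma Rint_coeff_nonneg (i : nat) (a b : R) :
  (i < m)%nat -> t0 < a -> a <= b -> 0 <= Rint (p i) a b.
Proof.
  intros Hi Ha Hab. rewrite Rint_coeff_RInt by assumption.
  apply RInt_ge_0; [exact Hab | |].
  - apply (@ex_RInt_continuous R_CompleteNormedModule). intros u Hu.
    rewrite Rmin_left in Hu by lra.
    apply continuity_pt_filterlim. apply (cont_on_from_interior t0); [auto | lra].
  - intros u Hu. apply p_nonneg; [auto | lra].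
Qed.

Section EventuallyPositiveSolution.
Variables (T1 : R) (z z' : R -> R).
Hypothesis T1_ge : t0 <= T1.
Hypothesis z_deriv : forall s, T1 < s -> derivable_pt_lim z s (z' s).
Hypothesis z_eq :
  forall s, T1 <= s -> z' s + sum_f_R0 (fun i => p i s * z (tau i s)) (m - 1) = 0.

(* Where all delayed values are nonnegative, z' <= 0. *)
Lemma solution_nonincreasing (B : R) :
  T1 < B -> (forall s i, B <= s -> (i < m)%nat -> 0 <= z (tau i s)) ->
  forall u v, B <= u -> u <= v -> z v <= z u.
Proof.
  intros HB Hdelayed u v Hu Huv.
  apply (nonincreasing_of_deriv_nonpos z z' u v Huv).
  - intros s Hs. apply z_deriv. lra.
  - intros s Hs.
    assert (0 <= sum_f_R0 (fun i => p i s * z (tau i s)) (m - 1)); [| specialize (z_eq s); lra].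
    apply sum_f_R0_nonneg. intros i Hi.
    apply Rmult_le_pos; [apply p_nonneg |apply Hdelayed]; lra || lia.
Qed.

(* Integrating the equation over [tau_j(t), t] and using that z is
   nonincreasing and tau_i(s) <= tau_i(t) for s <= t gives the row inequality
   sum_i (int_{tau_j(t)}^t p_i) z(tau_i(t)) <= z(tau_j(t)). *)
Lemma delayed_integral_inequality (B t : R) (j : nat) :
  T1 < B -> (forall u v, B <= u -> u <= v -> z v <= z u) ->
  (j < m)%nat -> B <= tau j t -> B <= t ->
  (forall s i, tau j t <= s -> (i < m)%nat -> B <= tau i s) -> 0 <= z t ->
  sum_f_R0 (fun i => Rint (p i) (tau j t) t * z (tau i t)) (m - 1) <= z (tau j t).
Proof.
  intros HB Hdecr Hj Ha Ht Hdelays Hzt.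
  set (a := tau j t) in *.
  assert (Hat : a <= t) by (apply tau_le; [exact Hj | lra]).
  set (G := fun u => z u + sum_f_R0 (fun i => z (tau i t) * RInt (p i) a u) (m - 1)).
  set (dG := fun s => z' s + sum_f_R0 (fun i => z (tau i t) * p i s) (m - 1)).
  assert (HG_deriv : forall s, a <= s <= t -> derivable_pt_lim G s (dG s)).
  { intros s Hs. apply derivable_pt_lim_plus; [apply z_deriv; lra |].
    apply (derivable_pt_lim_sum_f_R0 (fun i u => z (tau i t) * RInt (p i) a u)).
    intros i Hi. apply derivable_pt_lim_scal.
    apply (RInt_derivable _ t0); [apply p_cont; lia | lra | lra]. }
  assert (HdG : forall s, a <= s <= t -> dG s <= 0).
  { intros s Hs. unfold dG.
    assert (Hz's := z_eq s ltac:(lra)).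
    assert (sum_f_R0 (fun i => z (tau i t) * p i s) (m - 1)
            <= sum_f_R0 (fun i => p i s * z (tau i s)) (m - 1)); [| lra].
    apply sum_Rle. intros i Hi.
    assert (Hi' : (i < m)%nat) by lia.
    assert (z (tau i t) <= z (tau i s)).
    { apply Hdecr; [apply Hdelays; [lra | exact Hi'] | apply tau_mono; [exact Hi' | lra | lra]]. }
    assert (0 <= p i s) by (apply p_nonneg; [exact Hi' | lra]).
    nra. }
  assert (HGat := nonincreasing_of_deriv_nonpos G dG a t Hat HG_deriv HdG).
  unfold G in HGat.
  rewrite (sum_eq_R0 (fun i => z (tau i t) * RInt (p i) a a) (m - 1)) in HGat
    by (intros i _; rewrite RInt_point; unfold zero; simpl; ring).
  rewrite (sum_eq _ (fun i => Rint (p i) a t * z (tau i t))) in HGat.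
  - lra.
  - intros i Hi. rewrite Rint_coeff_RInt by (lia || lra). ring.
Qed.

(* An eventually positive solution forces root_product t <= 1/m^m for all
   large t: combine the row inequalities with the AM-GM bound. *)
Lemma root_product_eventually_small (A : R) :
  T1 < A -> (forall s, A <= s -> 0 < z s) ->
  exists T, forall t, T <= t -> root_product t <= / INR m ^ m.
Proof.
  intros HA Hzpos.
  destruct (delays_eventually_beyond A) as [T2 [HAT2 HT2]].
  assert (Hdecr : forall u v, T2 <= u -> u <= v -> z v <= z u).
  { apply solution_nonincreasing; [lra |].
    intros s i Hs Hi. left. apply Hzpos. apply HT2; assumption. }
  destruct (delays_eventually_beyond T2) as [T3 [HT23 HT3]].
  destruct (delays_eventually_beyond T3) as [T4 [HT34 HT4]].
  exists T4. intros t Ht.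
  assert (HK : 0 < INR m ^ m) by (apply pow_lt, lt_0_INR; lia).
  apply (Rmult_le_reg_l (INR m ^ m)); [exact HK |].
  rewrite Rinv_r by lra.
  apply (AGM.delay_AGM_bound m (fun i j => Rint (p i) (tau j t) t) (fun i => z (tau i t))).
  - exact m_pos.
  - intros i j Hi Hj. assert (T3 <= tau j t) by auto.
    apply Rint_coeff_nonneg; [exact Hi | lra | apply tau_le; [exact Hj | lra]].
  - intros i Hi. apply Hzpos. assert (T3 <= tau i t) by auto. lra.
  - intros j Hj. assert (T3 <= tau j t) by auto.
    apply (delayed_integral_inequality T2); auto; try lra.
    + intros s i Hs Hi. apply HT3; [lra | exact Hi].
    + left. apply Hzpos. lra.
Qed.
End EventuallyPositiveSolution.
End DelayEquation.

Theorem corollary3p3 (m : nat) (t0 : R) (p tau : nat -> R -> R) :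
  (1 <= m)%nat ->
  (forall i, (i < m)%nat -> cont_on_from t0 (p i)) ->
  (forall i, (i < m)%nat -> cont_on_from t0 (tau i)) ->
  (forall i t, (i < m)%nat -> t0 <= t -> 0 <= p i t) ->
  (forall i t, (i < m)%nat -> t0 <= t -> 0 <= tau i t) ->
  (forall i t, (i < m)%nat -> t0 <= t -> tau i t <= t) ->
  (forall i, (i < m)%nat ->
     forall M, exists T, forall t, T <= t -> M <= tau i t) ->
  (forall i s t, (i < m)%nat -> t0 <= s -> s <= t -> tau i s <= tau i t) ->
  limsup_gt
    (fun t => prod_f_R0 (fun j =>
        Rroot m (prod_f_R0 (fun i => Rint (p i) (tau j t) t) (m - 1)))
      (m - 1))
    (/ (INR m ^ m)) ->
  forall (T0 : R) (x : R -> R),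
    is_solution m t0 p tau T0 x -> oscillatory T0 x.
Proof.
  intros Hm Hpc _ Hp0 _ Htle Htinf Htmon Hlim T0 x Hsol.
  destruct Hsol as [HT0 [_ [T1 [Hlub [x' [_ [Hxd Hxeq]]]]]]].
  (* T0 belongs to the set whose supremum is T1, since tau(T0) <= T0. *)
  assert (HT0T1 : T0 <= T1).
  { apply (proj1 Hlub). split; [exact HT0 |].
    eapply Rle_trans; [apply tau_min_le_first | apply Htle; [lia | exact HT0]]. }
  assert (Hder : forall s, T1 < s -> derivable_pt_lim x s (x' s))
    by (intros s Hs; apply (deriv_from_interior T1); [apply Hxd |]; lra).
  intros T. apply NNPP. intros Hno.
  set (A := Rmax T T1 + 1).
  assert (HA : T <= A /\ T1 < A) by (pose proof (Rmax_l T T1); pose proof (Rmax_r T T1); unfold A; lra).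
  assert (Hnz : forall s, A <= s -> x s <> 0)
    by (intros s Hs Hxs; apply Hno; exists s; repeat split; lra || assumption).
  apply (limsup_gt_not_eventually_le _ _ Hlim).
  destruct (eventually_signed x T1 A) as [Hpos | Hneg]; try tauto.
  - intros s Hs. apply derivable_continuous_pt. exists (x' s). apply Hder, Hs.
  - apply (root_product_eventually_small m t0 p tau Hm Hpc Hp0 Htle Htinf Htmon
             T1 x x' ltac:(lra) Hder Hxeq A); tauto.
  - (* a negative solution: -x is a positive solution of the same equation *)
    apply (root_product_eventually_small m t0 p tau Hm Hpc Hp0 Htle Htinf Htmon
             T1 (fun u => - x u) (fun u => - x' u) ltac:(lra)) with (A := A).
    + intros s Hs. apply derivable_pt_lim_opp, Hder, Hs.
    + intros s Hs. rewrite (sum_eq _ (fun i => p i s * x (tau i s) * -1)) by (intros; ring).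
      rewrite <- scal_sum. specialize (Hxeq s Hs). lra.
    + tauto.
    + intros s Hs. specialize (Hneg s Hs). lra.
Qed.
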